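(* Consider a cathode solution $(\phi_{\mathrm{el}},\phi_{\mathrm{ion}},C)$ with active-layer boundary $h_b\in(h_1,h_2)$ in the classical formulation, i.e. with $\eta=s=\phi_{\mathrm{ion}}-\phi_{\mathrm{el}}-\frac{RT}{4F}\ln\frac{C^{\mathrm{bulk}}}{C}$, and assume $j_{\mathrm{cell}}>0$. Then there exists $\varepsilon>0$ such that $\eta(y)<0$ for all $y\in(h_b-\varepsilon,h_b)$. Consequently the charge-transfer current $i(y)$ is negative on $(h_b-\varepsilon,h_b)$.
   Context: Cathode model (isothermal, 1D). Fix real numbers $0<h_1<h_b<h_2$ and positive constants $\sigma_{\mathrm{el}},\sigma_{\mathrm{ion}}$ (effective electronic/ionic conductivities), $\rho_a$ (air density), $D_2$ (effective diffusion coefficient), $M$ (molar mass of $O_2$), $F$ (Faraday constant), $R$ (gas constant), $T$ (temperature), $A$ (reaction surface area per volume). Also fix $j_{\mathrm{cell}}>0$, $V_2\in\mathbb R$ and $C^{\mathrm{bulk}}\in(0,1)$. Charge-transfer current. For $y\in(h_1,h_b)$ set $$i(y)=A\,K\,\Big(\frac{\rho_a R T\,C(y)}{M}\Big)^{0.2}\Big[\exp\Big(\frac{1.2F\eta(y)}{RT}\Big)-\exp\Big(-\frac{F\eta(y)}{RT}\Big)\Big],\qquad K=1.47\cdot10^{6}\,e^{-85859/(RT)}.$$ Define the signed quantity $$s(y)=\phi_{\mathrm{ion}}(y)-\phi_{\mathrm{el}}(y)-\frac{RT}{4F}\ln\frac{C^{\mathrm{bulk}}}{C(y)}.$$ The activation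 overpotential is $\eta=s$ in the classical formulation and $\eta=|s|$ in the modified formulation. A cathode solution with active-layer boundary $h_b$ is a triple $\phi_{\mathrm{el}},\phi_{\mathrm{ion}},C\in C^1([h_1,h_2])$ with the following properties. - Regularity: each function is $C^2$ on $[h_1,h_b]$ and on $[h_b,h_2]$, and $C>0$. - Equations on $(h_1,h_b)$: $(\sigma_{\mathrm{el}}\phi_{\mathrm{el}}')'=-i$, $(\sigma_{\mathrm{ion}}\phi_{\mathrm{ion}}')'=i$ and $(\rho_aD_2C')'=\frac{M}{4F}i$. - Equations on $(h_b,h_2)$: all three left-hand sides vanish. - Boundary conditions: $-\sigma_{\mathrm{el}}\phi_{\mathrm{el}}'(h_2)=j_{\mathrm{cell}}$, $\phi_{\mathrm{ion}}'(h_2)=0$, $\phi_{\mathrm{el}}(h_2)=V_2$, $C(h_2)=C^{\mathrm{bulk}}$, $\phi_{\mathrm{el}}'(h_1)=0$, $-\sigma_{\mathrm{ion}}\phi_{\mathrm{ion}}'(h_1)=j_{\mathrm{cell}}$, $C'(h_1)=0$. - Interface condition: $s(h_b)=0$, i.e. $\eta(h_b)=0$. *)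

From Stdlib Require Import Reals Lra.
Open Scope R_scope.

Definition has_deriv_on (f f' : R -> R) (a b : R) : Prop :=
  forall x, a <= x <= b ->
    limit1_in (fun h => (f (x + h) - f x) / h)
              (fun h => h <> 0 /\ a <= x + h <= b) (f' x) 0.

Definition cont_on (f : R -> R) (a b : R) : Prop :=
  forall x, a <= x <= b -> limit1_in f (fun y => a <= y <= b) (f x) x.

Definition piecewise_C2 (f df d2l d2r : R -> R) (h1 hb h2 : R) : Prop :=
  has_deriv_on f df h1 h2 /\ cont_on df h1 h2 /\
  has_deriv_on df d2l h1 hb /\ cont_on d2l h1 hb /\
  has_deriv_on df d2r hb h2 /\ cont_on d2r hb h2.

Definition Kconst (Rg T : R) : R := 1470000 * exp (- 85859 / (Rg * T)).

Definition s_fun (Rg T F Cbulk : R) (phi_el phi_ion C : R -> R) (y : R) : R :=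
  phi_ion y - phi_el y - (Rg * T) / (4 * F) * ln (Cbulk / C y).

Definition i_ct (A Rg T F M rho_a : R) (C eta : R -> R) (y : R) : R :=
  A * Kconst Rg T * Rpower (rho_a * Rg * T * C y / M) (1 / 5) *
  (exp (6 / 5 * F * eta y / (Rg * T)) - exp (- (F * eta y / (Rg * T)))).

(* Beyond h_b there is no reaction, so the ionic current vanishes there and
   in particular at h_b.  Over the active layer the reaction terms cancel in
   the total current sigma_el phi_el' + sigma_ion phi_ion' and in the
   combination rho_a D_2 C' - M/(4F) sigma_ion phi_ion', so the boundary
   conditions at h_1 give phi_el'(h_b) = -j_cell/sigma_el < 0 and
   C'(h_b) = M j_cell / (4 F rho_a D_2) > 0.  Hence
   s'(h_b) = -phi_el'(h_b) + RT/(4F) C'(h_b)/C(h_b) > 0, and as s(h_b) = 0,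
   s < 0 just left of h_b; the current i has the sign of eta = s. *)

From Stdlib Require Import Reals Lra.
Open Scope R_scope.

Lemma has_deriv_on_interior (f df : R -> R) (a b x : R) :
  has_deriv_on f df a b -> a < x < b -> derivable_pt_lim f x (df x).
Proof.
  intros Hf Hx eps Heps.
  destruct (Hf x ltac:(lra) eps Heps) as [alp [Halp Hlim]].
  assert (Hd : 0 < Rmin alp (Rmin (x - a) (b - x))).
  { apply Rmin_pos; [lra | apply Rmin_pos; lra]. }
  exists (mkposreal _ Hd); intros h Hh0 Hh; simpl in Hh.
  pose proof (Rmin_l alp (Rmin (x - a) (b - x))).
  pose proof (Rmin_r alp (Rmin (x - a) (b - x))).
  pose proof (Rmin_l (x - a) (b - x)); pose proof (Rmin_r (x - a) (b - x)).
  apply Rabs_def2 in Hh.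
  apply Hlim; split.
  - split; [exact Hh0 | lra].
  - simpl; unfold Rdist; rewrite Rminus_0_r; apply Rabs_def1; lra.
Qed.

Lemma cont_on_sub (f : R -> R) (a b c d : R) :
  cont_on f a b -> a <= c -> d <= b -> cont_on f c d.
Proof.
  intros Hf Hc Hd x Hx eps Heps.
  destruct (Hf x ltac:(lra) eps Heps) as [alp [Halp Hlim]].
  exists alp; split; [exact Halp |].
  intros y [Hy Hdist]; apply Hlim; split; [lra | exact Hdist].
Qed.

Lemma cont_on_lin_comb (f g : R -> R) (p q a b : R) :
  cont_on f a b -> cont_on g a b -> cont_on (fun x => p * f x + q * g x) a b.
Proof.
  intros Hf Hg x Hx.
  apply limit_plus; apply limit_mul;
    [exact (limit_free (fun _ => p) _ 0 x) | exact (Hf x Hx)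
    | exact (limit_free (fun _ => q) _ 0 x) | exact (Hg x Hx)].
Qed.

Lemma adhDa_open_interval (a b e : R) :
  a < b -> a <= e <= b -> adhDa (fun y => a < y < b) e.
Proof.
  intros Hab He alp Halp.
  set (t := Rmin alp ((b - a) / 2) / 2).
  assert (0 < Rmin alp ((b - a) / 2)) by (apply Rmin_pos; lra).
  pose proof (Rmin_l alp ((b - a) / 2)); pose proof (Rmin_r alp ((b - a) / 2)).
  destruct (Rle_lt_dec e ((a + b) / 2)); [exists (e + t) | exists (e - t)];
    unfold t, Rdist; split; try lra; apply Rabs_def1; lra.
Qed.

Lemma eq_of_deriv0_interior (g : R -> R) (a b x y : R) :
  (forall z, a < z < b -> derivable_pt_lim g z 0) ->
  a < x < b -> a < y < b -> g x = g y.
Proof.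
  intros Hg Hx Hy.
  destruct (Rtotal_order x y) as [Hxy | [-> | Hyx]]; [| reflexivity |].
  - destruct (MVT_cor2 g (fun _ => 0) x y Hxy) as [c [Hc _]];
      [intros c Hc; apply Hg; lra | lra].
  - destruct (MVT_cor2 g (fun _ => 0) y x Hyx) as [c [Hc _]];
      [intros c Hc; apply Hg; lra | lra].
Qed.

(* Only one-sided continuity is available at a and b, so the interior value is
   carried to the endpoints by uniqueness of limits along (a,b). *)
Lemma eq_of_deriv0 (g : R -> R) (a b : R) :
  a < b -> cont_on g a b ->
  (forall x, a < x < b -> derivable_pt_lim g x 0) -> g a = g b.
Proof.
  intros Hab Hc Hg.
  set (D := fun y => a < y < b); set (m := (a + b) / 2).
  assert (Hconst : forall e, a <= e <= b -> limit1_in g D (g m) e).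
  { intros e He eps Heps; exists 1; split; [lra |].
    intros y [Hy _]; simpl; unfold Rdist.
    rewrite (eq_of_deriv0_interior g a b y m Hg Hy) by (unfold m; lra).
    rewrite Rminus_diag, Rabs_R0; exact Heps. }
  assert (Hend : forall e, a <= e <= b -> g e = g m).
  { intros e He.
    apply (single_limit g D _ _ e (adhDa_open_interval a b e Hab He)); [| exact (Hconst e He)].
    intros eps Heps; destruct (Hc e He eps Heps) as [alp [Halp Hlim]].
    exists alp; split; [exact Halp |].
    intros y [Hy Hdist]; apply Hlim; unfold D in Hy; split; [lra | exact Hdist]. }
  rewrite (Hend a), (Hend b); lra.
Qed.

Lemma lin_comb_eq_of_deriv (f g df dg : R -> R) (p q a b : R) :
  a < b -> cont_on f a b -> cont_on g a b ->
  has_deriv_on f df a b -> has_deriv_on g dg a b ->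
  (forall x, a < x < b -> p * df x + q * dg x = 0) ->
  p * f a + q * g a = p * f b + q * g b.
Proof.
  intros Hab Hfc Hgc Hf Hg Hdiff.
  apply (eq_of_deriv0 (fun x => p * f x + q * g x) a b Hab (cont_on_lin_comb f g p q a b Hfc Hgc)).
  intros x Hx; rewrite <- (Hdiff x Hx).
  apply derivable_pt_lim_plus with (f1 := fun y => p * f y) (f2 := fun y => q * g y);
    apply derivable_pt_lim_scal; eapply has_deriv_on_interior; eassumption.
Qed.

Lemma derivable_pt_lim_ln_ratio (f : R -> R) (c x df : R) :
  0 < c -> 0 < f x -> derivable_pt_lim f x df ->
  derivable_pt_lim (fun y => ln (c / f y)) x (- (df / f x)).
Proof.
  intros Hc Hfx Hf.
  assert (Hq := derivable_pt_lim_div (fct_cte c) f x 0 df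
                  (derivable_pt_lim_const c x) Hf ltac:(lra)).
  assert (Hpos : 0 < (fct_cte c / f)%F x)
    by (unfold fct_cte, div_fct; apply Rdiv_lt_0_compat; lra).
  replace (- (df / f x)) with (/ (fct_cte c / f)%F x * ((0 * f x - df * fct_cte c x) / (f x)²))
    by (unfold fct_cte, div_fct, Rsqr; field; lra).
  exact (derivable_pt_lim_comp _ ln x _ _ Hq (derivable_pt_lim_ln _ Hpos)).
Qed.

Lemma s_fun_derivable (Rg T F Cbulk : R) (phi_el phi_ion C : R -> R)
    (x del dion dc : R) :
  0 < Cbulk -> 0 < C x ->
  derivable_pt_lim phi_el x del -> derivable_pt_lim phi_ion x dion ->
  derivable_pt_lim C x dc ->
  derivable_pt_lim (s_fun Rg T F Cbulk phi_el phi_ion C) x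
    (dion - del + Rg * T / (4 * F) * (dc / C x)).
Proof.
  intros HCb HCx Hel Hion HC.
  replace (dion - del + Rg * T / (4 * F) * (dc / C x))
    with (dion - del - Rg * T / (4 * F) * - (dc / C x)) by ring.
  apply derivable_pt_lim_minus with (f1 := fun y => phi_ion y - phi_el y)
    (f2 := fun y => Rg * T / (4 * F) * ln (Cbulk / C y)).
  - exact (derivable_pt_lim_minus phi_ion phi_el x _ _ Hion Hel).
  - apply derivable_pt_lim_scal with (f := fun y => ln (Cbulk / C y)).
    exact (derivable_pt_lim_ln_ratio C Cbulk x dc HCb HCx HC).
Qed.

Lemma neg_left_of_root (f : R -> R) (x l m : R) :
  derivable_pt_lim f x l -> 0 < l -> f x = 0 -> 0 < m ->
  exists d, 0 < d /\ d <= m /\ forall y, x - d < y < x -> f y < 0.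
Proof.
  intros Hf Hl Hfx Hm.
  destruct (Hf l Hl) as [d Hd]; pose proof (cond_pos d).
  exists (Rmin d m); pose proof (Rmin_l d m); pose proof (Rmin_r d m).
  split; [apply Rmin_pos; lra | split; [exact (Rmin_r d m) |]]; intros y Hy.
  assert (Hq := Hd (y - x) ltac:(lra) ltac:(apply Rabs_def1; lra)).
  replace (x + (y - x)) with y in Hq by ring; rewrite Hfx in Hq.
  apply Rabs_def2 in Hq.
  assert (Hquot : 0 < (f y - 0) / (y - x)) by lra.
  replace ((f y - 0) / (y - x)) with (- f y / (x - y)) in Hquot by (field; lra).
  apply Rdiv_pos_cases in Hquot; lra.
Qed.

Lemma i_ct_neg (A Rg T F M rho_a : R) (C eta : R -> R) (y : R) :
  0 < A -> 0 < Rg -> 0 < T -> 0 < F -> eta y < 0 ->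
  i_ct A Rg T F M rho_a C eta y < 0.
Proof.
  intros HA HRg HT HF Heta; unfold i_ct, Kconst, Rpower.
  set (u := F * eta y / (Rg * T)).
  assert (Hu : u < 0) by (unfold u; apply Rdiv_neg_pos; nra).
  assert (Hexp : exp (6 / 5 * F * eta y / (Rg * T)) < exp (- u)).
  { apply exp_increasing; replace (6 / 5 * F * eta y / (Rg * T)) with (6 / 5 * u)
      by (unfold u; field; nra); lra. }
  assert (Hcoef : 0 < A * (1470000 * exp (- 85859 / (Rg * T))) *
                      exp (1 / 5 * ln (rho_a * Rg * T * C y / M))).
  { pose proof (exp_pos (- 85859 / (Rg * T)));
      pose proof (exp_pos (1 / 5 * ln (rho_a * Rg * T * C y / M))).
    repeat apply Rmult_lt_0_compat; lra. }
  nra.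
Qed.

Theorem mainTheorem2
  (h1 hb h2 sigma_el sigma_ion rho_a D2 M F Rg T A j_cell V2 Cbulk : R)
  (phi_el phi_ion C : R -> R)
  (dphi_el d2l_el d2r_el dphi_ion d2l_ion d2r_ion dC d2l_C d2r_C : R -> R) :
  0 < h1 -> h1 < hb -> hb < h2 ->
  0 < sigma_el -> 0 < sigma_ion -> 0 < rho_a -> 0 < D2 -> 0 < M ->
  0 < F -> 0 < Rg -> 0 < T -> 0 < A ->
  0 < j_cell -> 0 < Cbulk -> Cbulk < 1 ->
  (* regularity *)
  piecewise_C2 phi_el dphi_el d2l_el d2r_el h1 hb h2 ->
  piecewise_C2 phi_ion dphi_ion d2l_ion d2r_ion h1 hb h2 ->
  piecewise_C2 C dC d2l_C d2r_C h1 hb h2 ->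
  (forall y, h1 <= y <= h2 -> 0 < C y) ->
  (* equations on (h1,hb), classical formulation eta = s *)
  (forall y, h1 < y < hb ->
     sigma_el * d2l_el y =
       - i_ct A Rg T F M rho_a C (s_fun Rg T F Cbulk phi_el phi_ion C) y) ->
  (forall y, h1 < y < hb ->
     sigma_ion * d2l_ion y =
       i_ct A Rg T F M rho_a C (s_fun Rg T F Cbulk phi_el phi_ion C) y) ->
  (forall y, h1 < y < hb ->
     rho_a * D2 * d2l_C y =
       M / (4 * F) * i_ct A Rg T F M rho_a C (s_fun Rg T F Cbulk phi_el phi_ion C) y) ->
  (* equations on (hb,h2) *)
  (forall y, hb < y < h2 -> sigma_el * d2r_el y = 0) ->
  (forall y, hb < y < h2 -> sigma_ion * d2r_ion y = 0) ->
  (forall y, hb < y < h2 -> rho_a * D2 * d2r_C y = 0) ->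
  (* boundary conditions *)
  - sigma_el * dphi_el h2 = j_cell ->
  dphi_ion h2 = 0 ->
  phi_el h2 = V2 ->
  C h2 = Cbulk ->
  dphi_el h1 = 0 ->
  - sigma_ion * dphi_ion h1 = j_cell ->
  dC h1 = 0 ->
  (* interface condition *)
  s_fun Rg T F Cbulk phi_el phi_ion C hb = 0 ->
  exists eps, 0 < eps /\ eps <= hb - h1 /\
    forall y, hb - eps < y < hb ->
      s_fun Rg T F Cbulk phi_el phi_ion C y < 0 /\
      i_ct A Rg T F M rho_a C (s_fun Rg T F Cbulk phi_el phi_ion C) y < 0.
Proof.
  intros _ Hh1b Hhb2 Hsel Hsion Hrho HD2 HM HF HRg HT HA Hj HCb _
    [Del [Cdel [D2lel [_ [_ _]]]]] [Dion [Cdion [D2lion [_ [D2rion _]]]]]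
    [DC [CdC [D2lC [_ [_ _]]]]] HCpos Eel Eion EC _ Rion _
    _ Bion_h2 _ _ Bel_h1 Bion_h1 BC_h1 Hs_hb.
  assert (Hion_hb : dphi_ion hb = 0).
  { rewrite <- Bion_h2; apply eq_of_deriv0; [lra | apply (cont_on_sub _ h1 h2); auto; lra |].
    intros x Hx; replace 0 with (d2r_ion x) by (pose proof (Rion x Hx); nra).
    exact (has_deriv_on_interior _ _ hb h2 x D2rion Hx). }
  assert (Hcharge : sigma_el * dphi_el h1 + sigma_ion * dphi_ion h1
                    = sigma_el * dphi_el hb + sigma_ion * dphi_ion hb).
  { apply (lin_comb_eq_of_deriv _ _ d2l_el d2l_ion); auto;
      try (apply (cont_on_sub _ h1 h2); auto; lra).
    intros x Hx; rewrite (Eel x Hx), (Eion x Hx); ring. }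
  assert (Hoxygen : rho_a * D2 * dC h1 + - (M / (4 * F)) * sigma_ion * dphi_ion h1
                    = rho_a * D2 * dC hb + - (M / (4 * F)) * sigma_ion * dphi_ion hb).
  { apply (lin_comb_eq_of_deriv _ _ d2l_C d2l_ion); auto;
      try (apply (cont_on_sub _ h1 h2); auto; lra).
    intros x Hx; rewrite (EC x Hx), <- (Eion x Hx); ring. }
  assert (Hel_hb : dphi_el hb < 0) by nra.
  assert (HC_hb : 0 < dC hb).
  { assert (Hflux : rho_a * D2 * dC hb = M / (4 * F) * j_cell).
    { rewrite BC_h1, Hion_hb, <- Bion_h1 in *; lra. }
    assert (0 < M / (4 * F) * j_cell) by (apply Rmult_lt_0_compat; [apply Rdiv_lt_0_compat|]; lra).
    assert (0 < rho_a * D2) by (apply Rmult_lt_0_compat; lra).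
    nra. }
  assert (Hslope : 0 < dphi_ion hb - dphi_el hb + Rg * T / (4 * F) * (dC hb / C hb)).
  { assert (0 < C hb) by (apply HCpos; lra).
    apply Rplus_lt_0_compat; [lra | apply Rmult_lt_0_compat; apply Rdiv_lt_0_compat; nra]. }
  destruct (neg_left_of_root _ hb _ (hb - h1)
             (s_fun_derivable Rg T F Cbulk phi_el phi_ion C hb _ _ _ HCb (HCpos hb ltac:(lra))
                (has_deriv_on_interior _ _ h1 h2 hb Del ltac:(lra))
                (has_deriv_on_interior _ _ h1 h2 hb Dion ltac:(lra))
                (has_deriv_on_interior _ _ h1 h2 hb DC ltac:(lra)))
             Hslope Hs_hb ltac:(lra)) as [eps [Heps [Hbound Hneg]]].
  exists eps; split; [exact Heps | split; [exact Hbound |]]; intros y Hy.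
  split; [| apply i_ct_neg]; auto.
Qed.
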